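(* Let $M\in\mathcal{G}$ be such that $C_M$ and $C_{M^{-1}}$ are invertible, and set $Z_M=C_M^{-1}D_M$, $Z_{M^{-1}}=C_{M^{-1}}^{-1}D_{M^{-1}}$. Then $$Z_M=(\mathbb{1}+\Delta_{M^{-1}})^{-1}(\mathbb{1}-\Delta_{M^{-1}}),\qquad Z_MJ=-JZ_M,\qquad M=C_M(\mathbb{1}+Z_M),$$ $$\mathbb{1}=C_{M^{-1}}C_M(\mathbb{1}-Z_M^2),\qquad Z_{M^{-1}}C_M=-C_MZ_M,$$ where $\Delta_{M}=-MJM^{-1}J$.
   Context: Either bosonic case ($\mathcal{G}=\mathrm{Sp}(2N,\mathbb{R})$ preserving $\Omega=\begin{pmatrix}0&\mathbb{1}\\-\mathbb{1}&0\end{pmatrix}$, $J^2=-\mathbb{1}$, $J\Omega J^\intercal=\Omega$, $-J\Omega>0$) or fermionic case ($\mathcal{G}=\mathrm{SO}(2N,\mathbb{R})$, $J$ orthogonal with $J^2=-\mathbb{1}$). For a real linear map $M$ of $\mathbb{R}^{2N}$: $C_M=\frac12(M-JMJ)$ (the part commuting with $J$) and $D_M=\frac12(M+JMJ)$ (the part anticommuting with $J$). *)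

From HB Require Import structures.
From mathcomp Require Import all_boot all_order all_algebra.
Set Implicit Arguments. Unset Strict Implicit. Unset Printing Implicit Defensive.
Import Order.TTheory GRing.Theory Num.Theory.
Local Open Scope ring_scope.

Section Defs.
Variable R : realFieldType.
Variable N : nat.
Local Notation Mat := 'M[R]_(N + N).

Definition Omega : Mat := block_mx 0 1%:M (- 1%:M) 0.

(* commuting / anticommuting parts w.r.t. J *)
Definition CM (J M : Mat) : Mat := 2%:R^-1 *: (M - J *m M *m J).
Definition DM (J M : Mat) : Mat := 2%:R^-1 *: (M + J *m M *m J).
Definition ZM (J M : Mat) : Mat := invmx (CM J M) *m DM J M.
Definition DeltaM (J M : Mat) : Mat := - (M *m J *m invmx M *m J).

Definition posdef (A : Mat) : Prop :=
  forall x : 'cV[R]_(N + N), x != 0 -> 0 < ((x^T *m A *m x) 0 0).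

(* bosonic setting: J a compatible complex structure, M in Sp(2N,R) *)
Definition bosonic (J M : Mat) : Prop :=
  [/\ J *m J = - 1%:M, J *m Omega *m J^T = Omega, posdef (- (J *m Omega)),
      M \in unitmx & M *m Omega *m M^T = Omega].

(* fermionic setting: J orthogonal complex structure, M in SO(2N,R) *)
Definition fermionic (J M : Mat) : Prop :=
  [/\ J *m J = - 1%:M, J *m J^T = 1%:M, M *m M^T = 1%:M & \det M = 1].

End Defs.

From mathcomp Require Import all_boot all_order all_algebra.

(* Every X splits as X = C_X + D_X into a part commuting and a part
   anticommuting with J; a product of two parts of the same kind commutes with
   J, one of mixed kinds anticommutes.  Comparing parts in
   1 = M^-1 M = (C' + D') (C + D), where C' and D' are the parts of M^-1, gives
   C'C + D'D = 1 and C'D + D'C = 0, since 1 commutes with J.  Together with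
   Z_M = C^-1 D and 1 +- Delta_{M^-1} = 2 M^-1 C, 2 M^-1 D these yield all five
   identities. *)

Set Implicit Arguments.
Unset Strict Implicit.
Unset Printing Implicit Defensive.

Import Order.TTheory GRing.Theory Num.Theory.
Local Open Scope ring_scope.

Section Anticommutation.
Context {R : pzRingType} {n : nat}.
Implicit Types f g h : 'M[R]_n.

Definition anticomm_mx f g : Prop := f *m g = - (g *m f).

Lemma comm_anticomm_mxM f g h :
  comm_mx f g -> anticomm_mx f h -> anticomm_mx f (g *m h).
Proof.
by move=> fg fh; rewrite /anticomm_mx mulmxA fg -mulmxA fh mulmxN mulmxA.
Qed.

Lemma anticomm_comm_mxM f g h :
  anticomm_mx f g -> comm_mx f h -> anticomm_mx f (g *m h).
Proof.
by move=> fg fh; rewrite /anticomm_mx mulmxA fg mulNmx -mulmxA fh mulmxA.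
Qed.

Lemma anticomm_mxM f g h :
  anticomm_mx f g -> anticomm_mx f h -> comm_mx f (g *m h).
Proof.
move=> fg fh; rewrite /comm_mx mulmxA fg mulNmx -mulmxA fh.
by rewrite mulmxN opprK mulmxA.
Qed.

Lemma anticomm_mxD f g h :
  anticomm_mx f g -> anticomm_mx f h -> anticomm_mx f (g + h).
Proof. by move=> fg fh; rewrite /anticomm_mx mulmxDl mulmxDr fg fh opprD. Qed.

End Anticommutation.

Lemma comm_mx_invmx (R : comUnitRingType) n (f g : 'M[R]_n) :
  g \in unitmx -> comm_mx f g -> comm_mx f (invmx g).
Proof.
move=> g_unit fg; apply/esym.
by rewrite -{1}(mulmxK g_unit f) fg -mulmxA mulKmx.
Qed.

Section ComplexStructure.
Variables (R : realFieldType) (N : nat) (J : 'M[R]_(N + N)).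
Hypothesis JJ : J *m J = - 1%:M.
Implicit Types X Y M : 'M[R]_(N + N).

Lemma mulJJmx X : J *m (J *m X) = - X.
Proof. by rewrite mulmxA JJ mulNmx mul1mx. Qed.

Lemma mulmxJJ X : X *m J *m J = - X.
Proof. by rewrite -mulmxA JJ mulmxN mulmx1. Qed.

Lemma comm_mx_CM X : comm_mx J (CM J X).
Proof.
rewrite /comm_mx /CM -scalemxAl -scalemxAr mulmxBr mulmxBl.
by rewrite -!mulmxA mulJJmx !mulmxA mulmxJJ !opprK addrC.
Qed.

Lemma anticomm_mx_DM X : anticomm_mx J (DM J X).
Proof.
rewrite /anticomm_mx /DM -scalemxAl -scalemxAr -scalerN mulmxDr mulmxDl.
by rewrite -!mulmxA mulJJmx !mulmxA mulmxJJ opprD opprK addrC.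
Qed.

Let two_neq0 : (2%:R : R) != 0. Proof. by rewrite pnatr_eq0. Qed.

Lemma scale2_CM X : 2%:R *: CM J X = X - J *m X *m J.
Proof. by rewrite /CM scalerA divff ?two_neq0 // scale1r. Qed.

Lemma scale2_DM X : 2%:R *: DM J X = X + J *m X *m J.
Proof. by rewrite /DM scalerA divff ?two_neq0 // scale1r. Qed.

Lemma CM_add_DM X : CM J X + DM J X = X.
Proof.
apply: (scalerI two_neq0); rewrite scalerDr scale2_CM scale2_DM.
by rewrite addrACA addNr addr0 scaler_nat mulr2n.
Qed.

Lemma DM_comm X : comm_mx J X -> DM J X = 0.
Proof. by move=> JX; rewrite /DM JX mulmxJJ subrr scaler0. Qed.

Lemma DM_anticomm X : anticomm_mx J X -> DM J X = X.
Proof.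
move=> JX; apply: (scalerI two_neq0).
by rewrite scale2_DM JX mulNmx mulmxJJ opprK scaler_nat mulr2n.
Qed.

Lemma DM_comm_add_anticomm X Y :
  comm_mx J X -> anticomm_mx J Y -> DM J (X + Y) = Y.
Proof.
move=> JX JY; rewrite -[RHS]add0r -(DM_comm JX) -{2}(DM_anticomm JY).
by rewrite /DM -scalerDr mulmxDr mulmxDl addrACA.
Qed.

Section Invertible.
Variable M : 'M[R]_(N + N).
Hypothesis M_unit : M \in unitmx.

Lemma mulVmx_CM_DM :
  (CM J (invmx M) *m CM J M + DM J (invmx M) *m DM J M)
  + (CM J (invmx M) *m DM J M + DM J (invmx M) *m CM J M) = 1%:M.
Proof.
transitivity ((CM J (invmx M) + DM J (invmx M)) *m (CM J M + DM J M)).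
  by rewrite mulmxDl !mulmxDr addrACA (addrC (DM J _ *m DM J _)).
by rewrite !CM_add_DM mulVmx.
Qed.

Lemma DM_invmx_mul_CM :
  DM J (invmx M) *m CM J M = - (CM J (invmx M) *m DM J M).
Proof.
have commJ : comm_mx J (CM J (invmx M) *m CM J M + DM J (invmx M) *m DM J M).
  exact: comm_mxD (comm_mxM (comm_mx_CM _) (comm_mx_CM _))
                  (anticomm_mxM (anticomm_mx_DM _) (anticomm_mx_DM _)).
have anticommJ :
    anticomm_mx J (CM J (invmx M) *m DM J M + DM J (invmx M) *m CM J M).
  exact: anticomm_mxD (comm_anticomm_mxM (comm_mx_CM _) (anticomm_mx_DM _))
                      (anticomm_comm_mxM (anticomm_mx_DM _) (comm_mx_CM _)).
apply/eqP; rewrite -addr_eq0 addrC -(DM_comm_add_anticomm commJ anticommJ).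
by rewrite mulVmx_CM_DM (DM_comm (comm_mx1 J)).
Qed.

Lemma CM_invmx_mul_add_DM :
  CM J (invmx M) *m CM J M + DM J (invmx M) *m DM J M = 1%:M.
Proof. by rewrite -[RHS]mulVmx_CM_DM DM_invmx_mul_CM subrr addr0. Qed.

Lemma DeltaM_invmx :
  DeltaM J (invmx M) = - (invmx M *m (J *m M *m J)).
Proof. by rewrite /DeltaM invmxK !mulmxA. Qed.

Lemma add1_DeltaM_invmx :
  1%:M + DeltaM J (invmx M) = invmx M *m (2%:R *: CM J M).
Proof. by rewrite DeltaM_invmx scale2_CM mulmxBr mulVmx. Qed.

Lemma sub1_DeltaM_invmx :
  1%:M - DeltaM J (invmx M) = invmx M *m (2%:R *: DM J M).
Proof. by rewrite DeltaM_invmx opprK scale2_DM mulmxDr mulVmx. Qed.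

End Invertible.

Section UnitCommutingPart.
Variable M : 'M[R]_(N + N).
Hypothesis C_unit : CM J M \in unitmx.

Lemma CM_mul_ZM : CM J M *m ZM J M = DM J M.
Proof. exact: mulKVmx. Qed.

Lemma anticomm_ZM : anticomm_mx J (ZM J M).
Proof.
exact: comm_anticomm_mxM (comm_mx_invmx C_unit (comm_mx_CM M))
                         (anticomm_mx_DM M).
Qed.

Lemma CM_mul_add1_ZM : CM J M *m (1%:M + ZM J M) = M.
Proof. by rewrite mulmxDr mulmx1 CM_mul_ZM CM_add_DM. Qed.

Hypothesis M_unit : M \in unitmx.

Lemma unitmx_add1_DeltaM_invmx : 1%:M + DeltaM J (invmx M) \in unitmx.
Proof.
rewrite add1_DeltaM_invmx // unitmx_mul unitmx_inv M_unit.
by rewrite unitmxZ ?unitfE ?two_neq0.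
Qed.

Lemma ZM_Cayley :
  ZM J M = invmx (1%:M + DeltaM J (invmx M)) *m (1%:M - DeltaM J (invmx M)).
Proof.
apply: (canRL (mulKmx unitmx_add1_DeltaM_invmx)).
rewrite add1_DeltaM_invmx // sub1_DeltaM_invmx // -mulmxA -scalemxAl.
by rewrite CM_mul_ZM.
Qed.

Lemma CM_invmx_CM_sub1_ZM2 :
  CM J (invmx M) *m CM J M *m (1%:M - ZM J M *m ZM J M) = 1%:M.
Proof.
rewrite mulmxBr mulmx1 !mulmxA (mulmxK C_unit).
rewrite -[CM J (invmx M) *m DM J M]opprK -DM_invmx_mul_CM // !mulNmx.
by rewrite (mulmxK C_unit) opprK CM_invmx_mul_add_DM.
Qed.

Lemma ZM_invmx_mul_CM : CM J (invmx M) \in unitmx ->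
  ZM J (invmx M) *m CM J M = - (CM J M *m ZM J M).
Proof.
move=> Ci_unit; rewrite CM_mul_ZM /ZM -mulmxA DM_invmx_mul_CM //.
by rewrite mulmxN mulKmx.
Qed.

End UnitCommutingPart.
End ComplexStructure.

Lemma complex_structure_unitmx (R : realFieldType) N (J M : 'M[R]_(N + N)) :
  bosonic J M \/ fermionic J M -> J *m J = - 1%:M /\ M \in unitmx.
Proof.
case=> [[JJ _ _ M_unit _] | [JJ _ MMt _]]; split => //.
by case: (mulmx1_unit MMt).
Qed.

Theorem lemma2 (R : realFieldType) (N : nat) (J M : 'M[R]_(N + N)) :
  (bosonic J M \/ fermionic J M) ->
  CM J M \in unitmx -> CM J (invmx M) \in unitmx ->
  let ZM_ := ZM J M in
  let ZMi := ZM J (invmx M) in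
  let Dl := DeltaM J (invmx M) in
  [/\ (1%:M + Dl) \in unitmx /\ ZM_ = invmx (1%:M + Dl) *m (1%:M - Dl),
      ZM_ *m J = - (J *m ZM_),
      M = CM J M *m (1%:M + ZM_),
      1%:M = CM J (invmx M) *m CM J M *m (1%:M - ZM_ *m ZM_)
    & ZMi *m CM J M = - (CM J M *m ZM_)].
Proof.
move=> /complex_structure_unitmx[JJ M_unit] C_unit Ci_unit /=.
split.
- by split; [apply: unitmx_add1_DeltaM_invmx | apply: ZM_Cayley].
- by rewrite (anticomm_ZM JJ C_unit) opprK.
- by rewrite CM_mul_add1_ZM.
- by rewrite CM_invmx_CM_sub1_ZM2.
- exact: ZM_invmx_mul_CM.
Qed.
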